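(* Let $n\ge 2$ and let $d_1\ge d_2\ge\cdots\ge d_n\ge 1$ be integers, with node $k$ of $V=\{1,\dots,n\}$ assigned the value $d_k$. Fix a node $i\in V$ and a set $X(i)=\{j_1,\dots,j_m\}\subset V\setminus\{i\}$ with $m\le n-1-d_i$. Let $L(i)$ be the set of the $d_i$ smallest indices in $V\setminus(X(i)\cup\{i\})$. Then there is a simple graph $G(V,E)$ in which each node $k$ has degree $d_k$ and such that $(i,j)\notin E$ for all $j\in X(i)$, if and only if the sequence $d'|_{L(i)}$ reduced by $L(i)$ is graphical.
   Context: A sequence of nonnegative integers $(e_1,\dots,e_n)$ is graphical if there is a simple undirected graph (no loops, no multiple edges) on vertex set $\{1,\dots,n\}$ in which vertex $k$ has degree $e_k$ for every $k$ (vertices of degree $0$ are allowed). For a set $A(i)\subset V\setminus\{i\}$ with $|A(i)|=d_i$, the sequence reduced by $A(i)$ is $d'|_{A(i)}=(d'_1,\dots,d'_n)$ with $d'_k=d_k-1$ if $k\in A(i)$, $d'_k=d_k$ if $k\in V\setminus(A(i)\cup\{i\})$, and $d'_i=0$. *)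

From mathcomp Require Import all_boot.
Set Implicit Arguments. Unset Strict Implicit. Unset Printing Implicit Defensive.

(* Vertex set V = {1,...,n} is modelled by 'I_n = {0,...,n-1} (order preserved). *)

Definition simple_graph n (g : rel 'I_n) : Prop := irreflexive g /\ symmetric g.

Definition has_degrees n (g : rel 'I_n) (e : 'I_n -> nat) : Prop :=
  forall k, #|[set j | g k j]| = e k.

Definition graphical n (e : 'I_n -> nat) : Prop :=
  exists g : rel 'I_n, simple_graph g /\ has_degrees g e.

Definition reduced n (d : 'I_n -> nat) (i : 'I_n) (A : {set 'I_n}) : 'I_n -> nat :=
  fun k => if k == i then 0 else if k \in A then d k - 1 else d k.

(* L(i): the d_i smallest indices of V \ (X ∪ {i}). *)
Definition Lset n (d : 'I_n -> nat) (i : 'I_n) (X : {set 'I_n}) : {set 'I_n} :=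
  [set k | [&& k \notin X, k != i &
     #|[set j : 'I_n | [&& j \notin X, j != i & (j < k)%N]]| < d i]].

From mathcomp Require Import all_boot.
Set Implicit Arguments. Unset Strict Implicit. Unset Printing Implicit Defensive.

(* If d' reduced by L(i) is realized, joining i to L(i) realizes d, and no edge
   meets X(i) because L(i) avoids X(i).  Conversely, take a realization of d
   avoiding X(i).  While some v is a neighbour of i outside L(i), there is
   u in L(i) that is not a neighbour of i; u precedes v, so d_u >= d_v, and as
   i is a neighbour of v but not of u, u has a neighbour w <> v that v lacks.
   The switch of the edges iv, uw for iu, vw keeps all degrees, still avoids
   X(i), and brings the neighbourhood of i closer to L(i).  Once it equals
   L(i), deleting i realizes the reduced sequence. *)

Section Rank.
Variables (n : nat) (E : {set 'I_n}).

Definition rank (k : 'I_n) := #|[set j in E | j < k]|.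

Lemma rank_mono (j k : 'I_n) : j <= k -> rank j <= rank k.
Proof.
move=> le_jk; apply/subset_leq_card/subsetP => x; rewrite !inE.
by case/andP=> -> /leq_trans->.
Qed.

Lemma ltn_of_rank (u v : 'I_n) : rank u < rank v -> u < v.
Proof.
by move=> lt_r; rewrite ltnNge; apply: contraTN lt_r => /rank_mono; rewrite -leqNgt.
Qed.

Lemma rank_strict (j k : 'I_n) : j \in E -> j < k -> rank j < rank k.
Proof.
move=> Ej lt_jk; apply/proper_card/properP; split.
  by apply/subsetP => x; rewrite !inE => /andP[-> /ltn_trans->].
by exists j; rewrite !inE ?Ej ?lt_jk // ltnn andbF.
Qed.

Lemma rank_lt_card k : k \in E -> rank k < #|E|.
Proof.
move=> Ek; apply/proper_card/properP; split.
  by apply/subsetP => x; rewrite inE => /andP[].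
by exists k; rewrite // inE ltnn andbF.
Qed.

Lemma rank_inj : {in E &, injective rank}.
Proof.
move=> j k Ej Ek eq_rank; apply: val_inj.
case: (ltngtP j k) => // lt.
  by have := rank_strict Ej lt; rewrite eq_rank ltnn.
by have := rank_strict Ek lt; rewrite eq_rank ltnn.
Qed.

Lemma uniq_image_rank (A : {set 'I_n}) : A \subset E -> uniq (image rank A).
Proof.
move=> sAE; rewrite map_inj_in_uniq ?enum_uniq // => j k; rewrite !mem_enum.
by move=> Aj Ak; apply: rank_inj; apply: (subsetP sAE).
Qed.

Lemma image_rank : image rank E =i iota 0 #|E|.
Proof.
apply: (uniq_min_size (uniq_image_rank (subxx E)) _ _).2.
- by move=> _ /imageP[k Ek ->]; rewrite mem_iota rank_lt_card.
- by rewrite size_image size_iota.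
Qed.

Lemma card_rank_lt m : m <= #|E| -> #|[set k in E | rank k < m]| = m.
Proof.
move=> le_mE; rewrite -(size_image rank) -[RHS](size_iota 0).
apply/perm_size/uniq_perm.
- by apply: uniq_image_rank; apply/subsetP => k; rewrite inE => /andP[].
- exact: iota_uniq.
move=> r; rewrite mem_iota /=; apply/imageP/idP => [[k] | lt_rm].
  by rewrite inE => /andP[_ lt_km] ->.
have : r \in image rank E by rewrite image_rank mem_iota (leq_trans lt_rm).
by case/imageP => k Ek eq_r; exists k; rewrite // inE Ek -eq_r.
Qed.

End Rank.

Lemma cards_swap (T : finType) (A : {set T}) (a b : T) :
  a \in A -> b \notin A -> #|b |: (A :\ a)| = #|A|.
Proof. by move=> Aa Ab; rewrite cardsU1 (cardsD1 a A) Aa !inE (negbTE Ab) andbF. Qed.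

Section Switch.
Variables (n : nat) (g : rel 'I_n).

Definition edge (a b : 'I_n) : rel 'I_n :=
  fun x y => ((x == a) && (y == b)) || ((x == b) && (y == a)).

Definition switch (a b c d : 'I_n) : rel 'I_n := fun x y =>
  [|| g x y && ~~ edge a b x y && ~~ edge c d x y, edge a c x y | edge b d x y].

Lemma edgeC a b : edge a b =2 edge b a.
Proof. by move=> x y; rewrite /edge orbC. Qed.

Lemma edge_sym a b x y : edge a b x y = edge a b y x.
Proof. by rewrite /edge orbC andbC [(y == b) && _]andbC. Qed.

Lemma edge_xx a b x : a != b -> edge a b x x = false.
Proof.
move=> ab; rewrite /edge.
by case: (eqVneq x a) => [->|/negbTE xa]; rewrite ?eqxx ?(negbTE ab) ?xa ?andbF.
Qed.

Lemma switch_flip a b c d : switch a b c d =2 switch b a d c.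
Proof.
by move=> x y; rewrite /switch (edgeC a b) (edgeC c d) [edge a c x y || _]orbC.
Qed.

Lemma switch_swap a b c d : switch a b c d =2 switch c d a b.
Proof.
move=> x y; rewrite /switch (edgeC a c) (edgeC b d) -!andbA.
by rewrite [~~ edge a b x y && _]andbC.
Qed.

Lemma neighbours_switch a b c d : a != b -> a != c -> a != d ->
  [set y | switch a b c d a y] = c |: ([set y | g a y] :\ b).
Proof.
move=> ab ac ad; apply/setP => y; rewrite !inE /switch /edge eqxx.
rewrite (negbTE ab) (negbTE ac) (negbTE ad) /=.
by rewrite !orbF andbT orbC andbC.
Qed.

Lemma neighbours_switch_other a b c d x :
  x != a -> x != b -> x != c -> x != d ->
  [set y | switch a b c d x y] = [set y | g x y].
Proof.
move=> xa xb xc xd; apply/setP => y; rewrite !inE /switch /edge.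
by rewrite (negbTE xa) (negbTE xb) (negbTE xc) (negbTE xd) /= !andbT !orbF.
Qed.

Lemma switch_realizes e a b c d :
  simple_graph g -> has_degrees g e ->
  g a b -> g c d -> ~~ g a c -> ~~ g b d ->
  a != c -> a != d -> b != c -> b != d ->
  simple_graph (switch a b c d) /\ has_degrees (switch a b c d) e.
Proof.
move=> [irr sym] deg gab gcd gac gbd ac ad bc bd.
have ab : a != b by apply: contraTneq gab => ->; rewrite irr.
have cd : c != d by apply: contraTneq gcd => ->; rewrite irr.
have [ba ca da] : [/\ b != a, c != a & d != a] by rewrite !(eq_sym _ a).
have [cb db dc] : [/\ c != b, d != b & d != c] by rewrite !(eq_sym _ b) (eq_sym d).
split; first split.
- by move=> x; rewrite /switch irr !edge_xx.
- by move=> x y; rewrite /switch sym !(edge_sym _ _ x y).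
have [gba gdc] : g b a /\ g d c by rewrite sym (sym d).
have [gca gdb] : ~~ g c a /\ ~~ g d b by rewrite sym (sym d).
move=> x; rewrite -deg.
have [->|xa] := eqVneq x a.
  by rewrite neighbours_switch // cards_swap ?inE.
have [->|xb] := eqVneq x b.
  rewrite (eq_finset _ (switch_flip a b c d b)) neighbours_switch //.
  by rewrite cards_swap ?inE.
have [->|xc] := eqVneq x c.
  rewrite (eq_finset _ (switch_swap a b c d c)) neighbours_switch //.
  by rewrite cards_swap ?inE.
have [->|xd] := eqVneq x d.
  rewrite (eq_finset _ (switch_swap a b c d d)).
  rewrite (eq_finset _ (switch_flip c d a b d)).
  by rewrite neighbours_switch // cards_swap ?inE.
by rewrite neighbours_switch_other.
Qed.

End Switch.

Section Lset.
Variables (n : nat) (d : 'I_n -> nat) (i : 'I_n) (X : {set 'I_n}).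
Let E := ~: (i |: X).

Lemma Lset_rank : Lset d i X = [set k in E | rank E k < d i].
Proof.
have memE j : (j \in E) = (j \notin X) && (j != i) by rewrite !inE negb_or andbC.
apply/setP => k; rewrite inE [RHS]inE memE -andbA /rank.
do 2!congr (_ && _); congr (_ < _); apply: eq_card => j.
by rewrite inE [RHS]inE memE andbA.
Qed.

Lemma Lset_sub : Lset d i X \subset E.
Proof. by rewrite Lset_rank; apply/subsetP => k; rewrite inE => /andP[]. Qed.

Lemma card_Lset : i \notin X -> #|X| + d i <= n - 1 -> #|Lset d i X| = d i.
Proof.
move=> iX le_card; rewrite Lset_rank card_rank_lt //.
rewrite -(leq_add2l #|i |: X|) cardsC card_ord cardsU1 iX add1n.
rewrite addSn (leq_ltn_trans le_card) // subn1 ltn_predL.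
exact: leq_ltn_trans (ltn_ord i).
Qed.

Lemma Lset_ltn u v : u \in Lset d i X -> v \in E -> v \notin Lset d i X -> u < v.
Proof.
rewrite Lset_rank !inE => /andP[_ lt_u] Ev; rewrite Ev /= -leqNgt => le_v.
by apply: ltn_of_rank; apply: leq_trans le_v.
Qed.

End Lset.

Lemma cards_swapD (T : finType) (A L : {set T}) (u v : T) :
  u \in L -> v \in A :\: L -> #|(u |: (A :\ v)) :\: L| < #|A :\: L|.
Proof.
move=> Lu vAL; apply/proper_card/properP; split.
  apply/subsetP => y; rewrite !inE => /andP[Ly /orP[/eqP yu | /andP[_ Ay]]].
    by rewrite yu Lu in Ly.
  by rewrite Ly.
have vu : v != u by apply: contraTneq vAL => ->; rewrite inE Lu.
by exists v; rewrite // !inE eqxx (negbTE vu) andbF.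
Qed.

Lemma exists_private_neighbour n (g : rel 'I_n) (u v x : 'I_n) :
  simple_graph g -> #|[set y | g v y]| <= #|[set y | g u y]| ->
  g v x -> ~~ g u x -> x != u -> exists w, [/\ g u w, ~~ g v w & v != w].
Proof.
move=> [irr sym] le_deg gvx gux xu.
have /subsetPn[w] : ~~ ([set y | g u y] :\ v \subset [set y | g v y] :\ u).
  apply/negP => sub.
  have lt_card : #|[set y | g u y] :\ v| < #|[set y | g v y] :\ u|.
    apply/proper_card/properP; split=> //.
    by exists x; rewrite !inE ?xu ?gvx ?(negbTE gux) ?andbF.
  suff : #|[set y | g v y] :\ u| <= #|[set y | g u y] :\ v|.
    by rewrite leqNgt lt_card.
  rewrite -(leq_add2l (g u v)) {1}sym.
  have := cardsD1 v [set y | g u y]; have := cardsD1 u [set y | g v y].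
  by rewrite !inE => <- <-.
rewrite !inE => /andP[wv guw] /negP gvw; exists w; split; rewrite 1?eq_sym //.
apply/negP => gvw'; apply: gvw; rewrite gvw' andbT.
by apply: contraTneq guw => ->; rewrite irr.
Qed.

Section NeighboursLset.
Variables (n : nat) (d : 'I_n -> nat) (i : 'I_n) (X : {set 'I_n}).
Hypothesis d_noninc : forall k l : 'I_n, k <= l -> d l <= d k.
Hypothesis card_L : #|Lset d i X| = d i.
Let L := Lset d i X.

Lemma switch_step g v :
  simple_graph g -> has_degrees g d -> (forall j, j \in X -> ~~ g i j) ->
  v \in [set j | g i j] :\: L ->
  exists g', [/\ simple_graph g', has_degrees g' d,
    (forall j, j \in X -> ~~ g' i j) &
    #|[set j | g' i j] :\: L| < #|[set j | g i j] :\: L|].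
Proof.
move=> gs gd gX vNL; have [irr sym] := gs.
have /andP[vL giv] : (v \notin L) && g i v by move: vNL; rewrite !inE.
have /subsetPn[u Lu] : ~~ (L \subset [set j | g i j]).
  apply: contra vL => /(subset_cardP (etrans card_L (esym (gd i)))) eqLN.
  by rewrite eqLN inE.
rewrite inE => giu.
have /andP[iu uX] : (i != u) && (u \notin X).
  by have := subsetP (Lset_sub d i X) u Lu; rewrite !inE negb_or eq_sym.
have Ev : v \in ~: (i |: X).
  rewrite !inE negb_or; apply/andP; split.
    by apply: contraTneq giv => ->; rewrite irr.
  by apply: contraTN giv; apply: gX.
have vu : v != u by apply: contraTneq (Lset_ltn Lu Ev vL) => ->; rewrite ltnn.
have [w [guw gvw vw]] : exists w, [/\ g u w, ~~ g v w & v != w].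
  apply: (exists_private_neighbour (x := i) gs); rewrite 1?sym //.
  by rewrite !gd d_noninc // ltnW // (Lset_ltn Lu Ev vL).
have iw : i != w by apply: contraTneq guw => <-; rewrite sym.
have iv : i != v by apply: contraTneq giv => ->; rewrite irr.
have [gs' gd'] := switch_realizes gs gd giv guw giu gvw iu iw vu vw.
have Ni' := neighbours_switch g iv iu iw.
exists (switch g i v u w); split=> //; last by rewrite Ni' cards_swapD.
move=> j Xj; have ju : j != u by apply: contraTneq Xj => ->.
move/setP/(_ j): Ni'; rewrite !inE => ->.
by rewrite (negbTE ju) (negbTE (gX j Xj)) andbF.
Qed.

Lemma realization_with_neighbours_Lset g :
  simple_graph g -> has_degrees g d -> (forall j, j \in X -> ~~ g i j) ->
  exists g', [/\ simple_graph g', has_degrees g' d & [set j | g' i j] = L].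
Proof.
have [m] := ubnP #|[set j | g i j] :\: L|; elim: m g => // m IH g lt_m gs gd gX.
case: (eqVneq ([set j | g i j] :\: L) set0) => [NL0 | /set0Pn[v vNL]].
  exists g; split=> //; apply/eqP.
  by rewrite eqEcard card_L gd leqnn andbT -setD_eq0 NL0.
have [g' [gs' gd' gX' lt_g']] := switch_step gs gd gX vNL.
exact: IH g' (leq_trans lt_g' (ltnSE lt_m)) gs' gd' gX'.
Qed.

End NeighboursLset.

Section Reduced.
Variables (n : nat) (d : 'I_n -> nat) (i : 'I_n) (A : {set 'I_n}).

Lemma reduced_graphical g :
  simple_graph g -> has_degrees g d -> [set j | g i j] = A ->
  graphical (reduced d i A).
Proof.
move=> [irr sym] deg NiA.
exists (fun x y => [&& g x y, x != i & y != i]); split; first split.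
- by move=> x; rewrite irr.
- by move=> x y; rewrite sym; congr (_ && _); apply: andbC.
move=> k; rewrite /reduced; case: (eqVneq k i) => [->|ki].
  by apply/eqP; rewrite cards_eq0; apply/eqP/setP => y; rewrite !inE andbF.
rewrite (_ : [set j | _] = [set j | g k j] :\ i); last first.
  by apply/setP => y; rewrite !inE andbC.
have kA : (k \in A) = (i \in [set j | g k j]) by rewrite -NiA !inE sym.
have := cardsD1 i [set j | g k j]; rewrite deg -kA.
by case: (k \in A) => ->; rewrite ?add1n ?subn1.
Qed.

Lemma realization_of_reduced :
  i \notin A -> #|A| = d i -> {in A, forall k, 0 < d k} ->
  graphical (reduced d i A) ->
  exists g, [/\ simple_graph g, has_degrees g d & [set j | g i j] = A].
Proof.
move=> iA cardA dA [g0 [[irr sym] deg0]].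
have g0i y : g0 i y = false.
  have /eqP := deg0 i; rewrite /reduced eqxx cards_eq0 => /eqP/setP/(_ y).
  by rewrite !inE.
pose g x y := [|| g0 x y, (x == i) && (y \in A) | (y == i) && (x \in A)].
have Ni : [set j | g i j] = A.
  by apply/setP => y; rewrite !inE /g g0i eqxx (negbTE iA) /= andbF orbF.
exists g; split=> //; first split.
- move=> x; rewrite /g irr.
  by case: (eqVneq x i) => [->|]; rewrite ?(negbTE iA) ?andbF.
- by move=> x y; rewrite /g sym; congr (_ || _); apply: orbC.
move=> k; case: (eqVneq k i) => [->|ki]; first by rewrite Ni.
have := deg0 k; rewrite /reduced (negbTE ki).
case: ifP => kA deg0k.
  have i_notin : i \notin [set j | g0 k j] by rewrite inE sym g0i.
  have -> : [set j | g k j] = i |: [set j | g0 k j].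
    by apply/setP => y; rewrite !inE /g (negbTE ki) kA /= andbT orbC.
  by rewrite cardsU1 i_notin deg0k add1n subn1 prednK // dA.
rewrite -deg0k; apply: eq_card => y.
by rewrite !inE /g (negbTE ki) kA /= !andbF !orbF.
Qed.

End Reduced.

Theorem theorem3 (n : nat) (d : 'I_n -> nat) (i : 'I_n) (X : {set 'I_n}) :
  2 <= n ->
  (forall k l : 'I_n, k <= l -> d l <= d k) ->
  (forall k : 'I_n, 1 <= d k) ->
  i \notin X ->
  #|X| + d i <= n - 1 ->
  (exists g : rel 'I_n,
      simple_graph g /\ has_degrees g d /\ (forall j, j \in X -> ~~ g i j))
  <-> graphical (reduced d i (Lset d i X)).
Proof.
move=> _ d_noninc d_pos iX card_X.
have card_L := card_Lset iX card_X.
have L_E := Lset_sub d i X.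
split=> [[g [gs [gd gX]]] | red].
  have [g' [gs' gd' NL]] := realization_with_neighbours_Lset d_noninc card_L gs gd gX.
  exact: reduced_graphical gs' gd' NL.
have iL : i \notin Lset d i X by apply/negP => /(subsetP L_E); rewrite !inE eqxx.
have [g [gs gd NL]] := realization_of_reduced iL card_L (fun k _ => d_pos k) red.
exists g; do 2!split=> //; move=> j Xj; apply: contraTN Xj => gij.
have : j \in Lset d i X by rewrite -NL inE.
by move/(subsetP L_E); rewrite !inE negb_or => /andP[].
Qed.
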